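(* For every integer $m>1$ and positive integers $w,d$ there is a number $\gamma=f(m,w,d)$ such that the following holds. Let $G$ be a connected graph with $\Delta(G)\leq d$, let $(T,\mathcal{Y})$ be a lean tree-decomposition of $G$ of width at most $w$, let $P$ be a path in $T$, and let $t_1,\ldots,t_{\gamma'}$ with $\gamma'\geq\gamma$ be interior vertices of $P$ occurring along $P$ in this order, such that for some positive integer $s$, $|Y_{t_i}|=s$ for all $i$ and $|Y_t|\ge s$ for all $t$ on $P$ between $t_1$ and $t_{\gamma'}$, and $Y_{t_i}\cap Y_{t_j}=U$ for all distinct $i,j$, for a fixed set $U\subseteq V(G)$. Then there is an integer $k\geq 0$ with $k+m\leq\gamma'$ such that $N(U)\cap\big(Y_P[t_{k+1},t_{k+m})\setminus U\big)=\emptyset$.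
   Context: All graphs are finite and loopless but may have parallel edges. A tree-decomposition of $G$ is a pair $(T,\mathcal{Y})$ where $T$ is a tree and $\mathcal{Y}=\{Y_t\}_{t\in V(T)}$ is a family of subsets of $V(G)$ (bags) such that (W1) $\bigcup_{t} Y_t=V(G)$ and every edge of $G$ has both ends in some $Y_t$; and (W2) if $t'$ lies on the path of $T$ between $t$ and $t''$ then $Y_t\cap Y_{t''}\subseteq Y_{t'}$. Its width is $\max_t(|Y_t|-1)$. It is lean if additionally: (W3) for every two vertices $t,t'$ of $T$ and every positive integer $k$, either $G$ has $k$ vertex-disjoint paths between $Y_t$ and $Y_{t'}$, or some vertex $t''$ on the path of $T$ between $t$ and $t'$ has $|Y_{t''}|<k$; (W4) distinct vertices $t\ne t'$ of $T$ have $Y_t\neq Y_{t'}$; (W5) if $t_0\in V(T)$ and $B$ is a component of $T-t_0$, then $\bigcup_{t\in V(B)}Y_t\setminus Y_{t_0}\neq\emptyset$. For vertices $t',t''$ of the path $P$, $P[t',t'']$ is the subpath of $P$ between them, and $Y_P[t',t'')$ is the union of all bags $Y_t$ such that either $t\in V(P[t',t''])$, or $t\in V(T)\setminus V(P)$ and the unique path in $T$ from $t$ to $P$ ends at a vertex of $P[t',t'']-t''$. For $X\subseteq V(G)$, $N(X)$ is the set of vertices not in $X$ adjacent to some vertex of $X$. *)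

From mathcomp Require Import all_boot.
Set Implicit Arguments. Unset Strict Implicit. Unset Printing Implicit Defensive.

Definition loopless (V E : finType) (ends : E -> V * V) : Prop :=
  forall e, (ends e).1 != (ends e).2.

Definition adj (V E : finType) (ends : E -> V * V) : rel V :=
  fun u v => [exists e, (ends e == (u, v)) || (ends e == (v, u))].

Definition degree (V E : finType) (ends : E -> V * V) (v : V) : nat :=
  #|[set e | ((ends e).1 == v) || ((ends e).2 == v)]|.

Definition max_degree_le (V E : finType) (ends : E -> V * V) (d : nat) : Prop :=
  forall v, degree ends v <= d.

Definition gconnected (V E : finType) (ends : E -> V * V) : Prop :=
  forall u v, connect (adj ends) u v.

Definition nbh (V E : finType) (ends : E -> V * V) (X : {set V}) : {set V} :=
  [set v | (v \notin X) && [exists u in X, adj ends u v]].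

Definition gpath_between (V E : finType) (ends : E -> V * V) (A B : {set V})
  (p : seq V) : Prop :=
  exists x q, p = x :: q /\ uniq p /\ path (adj ends) x q /\ x \in A /\ last x q \in B.

Definition k_disjoint_paths (V E : finType) (ends : E -> V * V) (k : nat)
  (A B : {set V}) : Prop :=
  exists p : 'I_k -> seq V,
    (forall i, gpath_between ends A B (p i)) /\
    (forall i j, i != j -> forall v, ~ (v \in p i /\ v \in p j)).

Definition tpath (T : finType) (e : rel T) (x : T) (p : seq T) (y : T) : Prop :=
  uniq (x :: p) /\ path e x p /\ last x p = y.

Definition is_tree (T : finType) (e : rel T) : Prop :=
  0 < #|T| /\ symmetric e /\ irreflexive e /\ (forall x y, connect e x y) /\
  ~ (exists x p, uniq (x :: p) /\ 2 <= size p /\ path e x p /\ e (last x p) x).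

Definition on_tpath (T : finType) (e : rel T) (t t' t'' : T) : Prop :=
  exists p, tpath e t p t'' /\ t' \in t :: p.

Definition tree_decomposition (V E T : finType) (ends : E -> V * V) (e : rel T)
  (Y : T -> {set V}) : Prop :=
  (forall v, exists t, v \in Y t) /\
  (forall ed, exists t, ((ends ed).1 \in Y t) && ((ends ed).2 \in Y t)) /\
  (forall t t' t'', on_tpath e t t' t'' -> Y t :&: Y t'' \subset Y t').

Definition td_width_le (V T : finType) (Y : T -> {set V}) (w : nat) : Prop :=
  forall t, #|Y t| <= w.+1.

(* component of T - t0 containing t1 (t1 <> t0) *)
Definition comp_rel (T : finType) (e : rel T) (t0 : T) : rel T :=
  fun x y => [&& e x y, x != t0 & y != t0].

Definition lean (V E T : finType) (ends : E -> V * V) (e : rel T)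
  (Y : T -> {set V}) : Prop :=
  (forall t t' k, 0 < k ->
     k_disjoint_paths ends k (Y t) (Y t') \/
     exists t'', on_tpath e t t'' t' /\ #|Y t''| < k) /\
  (forall t t', t != t' -> Y t != Y t') /\
  (* W5: every component B of T - t0 (given by any of its vertices t1) *)
  (forall t0 t1, t1 != t0 ->
     exists t, connect (comp_rel e t0) t1 t /\ Y t :\: Y t0 != set0).

Definition lean_tree_decomposition (V E T : finType) (ends : E -> V * V)
  (e : rel T) (Y : T -> {set V}) : Prop :=
  tree_decomposition ends e Y /\ lean ends e Y.

Definition tree_path_seq (T : finType) (e : rel T) (P : seq T) : Prop :=
  P != [::] /\ uniq P /\ sorted e P.

(* the unique path in T from t to P ends at x *)
Definition attaches_at (T : finType) (e : rel T) (P : seq T) (t x : T) : Prop :=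
  x \in P /\ exists p, tpath e t p x /\ all (fun z => z \notin P) (belast t p).

(* membership in Y_P[t', t''), where t', t'' are the vertices of P at
   positions a <= b (positions in the sequence P) *)
Definition in_YP (V T : finType) (e : rel T) (Y : T -> {set V}) (P : seq T)
  (a b : nat) (v : V) : Prop :=
  exists t, v \in Y t /\
    ((t \in P /\ a <= index t P <= b) \/
     (t \notin P /\ exists x, attaches_at e P t x /\ a <= index x P < b)).

From mathcomp Require Import all_boot zify.
From Stdlib Require Import Classical.
Set Implicit Arguments. Unset Strict Implicit. Unset Printing Implicit Defensive.

(* Suppose every window t_(k+1), ..., t_(k+m) fails, and in every other window
   choose a vertex of N(U) \ U lying in Y_P of that window.  Two windows are then
   separated by at least two nodes t_c, t_c'.  If the same vertex v were chosen
   twice, the bags containing v would attach to P on both sides of t_c and t_c';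
   as T is a tree, the path joining these bags runs along P through t_c and t_c',
   so (W2) puts v into Y_(t_c) and Y_(t_c'), whose intersection is U.  Hence the
   number of windows is at most |N(U)| <= |U| d <= (w+1) d.  Only (W2), the width
   and the degree bound are needed. *)

Lemma last_rev (T : Type) (x : T) s : last x (rev s) = head x s.
Proof. by case: s => //= y s; rewrite rev_cons last_rcons. Qed.

Section AttachPaths.
Variables (T : finType) (e : rel T) (P : seq T).
Hypothesis e_sym : symmetric e.
Hypothesis e_acyclic :
  ~ (exists x p, uniq (x :: p) /\ 2 <= size p /\ path e x p /\ e (last x p) x).

(* Encodes a path of T from the node [head x A] to P that meets P only in its
   end [x]; for a node [x] of P itself, [A] is empty. *)
Definition attach_path (A : seq T) (x : T) : Prop :=
  [/\ sorted e (rcons A x), uniq (rcons A x), all [pred y | y \notin P] A & x \in P].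

Lemma attach_path_uniq A x : attach_path A x -> uniq A.
Proof. by case=> _; rewrite rcons_uniq => /andP[]. Qed.

Lemma attach_path_suffix A1 A2 x : attach_path (A1 ++ A2) x -> attach_path A2 x.
Proof.
case; rewrite rcons_cat all_cat cat_uniq => /cat_sorted2[_ ?] /and3P[_ _ ?].
by case/andP.
Qed.

Lemma sorted_rcons_rev B x : sorted e (rcons B x) -> path e x (rev B).
Proof.
have flip_e : (fun z => e^~ z) =2 e by move=> a b; exact: e_sym.
by rewrite -(eq_sorted flip_e) -rev_sorted rev_rcons.
Qed.

Lemma join_attach_paths A x1 s B x2 :
  attach_path A x1 -> attach_path B x2 ->
  path e x1 s -> last x1 s = x2 -> uniq (x1 :: s) -> all (mem P) s ->
  uniq (A ++ B) ->
  tpath e (head x1 A) (behead (A ++ x1 :: s ++ rev B)) (head x2 B).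
Proof.
move=> [sA _ offA x1P] [sB _ offB _] ps ls us sP uAB.
set L := A ++ _.
have eL : head x1 A :: behead L = L by rewrite /L; case: (A).
suff [sL uL] : sorted e L /\ uniq L.
  split; first by rewrite eL.
  split; first by have := sL; rewrite -eL.
  by rewrite -(last_cons x1) eL /L last_cat /= last_cat ls last_rev.
split; last first.
  have offAB : all [pred y | y \notin P] (A ++ B) by rewrite all_cat offA offB.
  have /perm_uniq -> : perm_eq L ((A ++ B) ++ x1 :: s).
    by rewrite /L -catA perm_cat2l -cat_cons perm_catC perm_cat2r perm_rev.
  rewrite cat_uniq uAB us andbT; apply/hasPn => y y_in.
  have yP : y \in P by case/predU1P: y_in => [->|/(allP sP)].
  by apply: contraTN yP => /(allP offAB).
by rewrite /L sorted_cat_cons sA /= cat_path ps ls sorted_rcons_rev.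
Qed.

Lemma attach_paths_disjoint A x1 s B x2 :
  attach_path A x1 -> attach_path B x2 ->
  path e x1 s -> last x1 s = x2 -> uniq (x1 :: s) -> all (mem P) s ->
  x1 != x2 -> uniq (A ++ B).
Proof.
move=> aA aB ps ls us sP x12.
rewrite cat_uniq (attach_path_uniq aA) (attach_path_uniq aB) andbT /= has_sym.
apply/negP => hasB.
have [RA eA] : exists RA, A = rev RA by exists (rev A); rewrite revK.
rewrite {A}eA has_rev in aA hasB.
(* Let z be the last vertex of A on B: from z along A to x1, along P to x2 and
   back along B to z is a cycle of T. *)
move: aA; case: (split_find hasB) => z R1 R2 zB noB aA {hasB}.
case/splitPr: B / zB aB noB => C D aB noB.
have aR : attach_path (z :: rev R1) x1.
  by apply: (@attach_path_suffix (rev R2)); rewrite -rev_rcons -rev_cat.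
have aD : attach_path D x2 by apply: (@attach_path_suffix (rcons C z)); rewrite cat_rcons.
have uRD : uniq ((z :: rev R1) ++ D).
  have zD : z \notin D.
    by have := attach_path_uniq aB; rewrite cat_uniq /= => /and3P[_ _ /andP[]].
  rewrite cat_uniq (attach_path_uniq aR) (attach_path_uniq aD) andbT.
  apply/hasPn => y yD; rewrite inE mem_rev negb_or; apply/andP; split.
    by apply: contraNneq zD => <-.
  by apply: contraNN noB => yR1; apply/hasP; exists y => //; rewrite mem_cat inE yD !orbT.
have [uc [pc lc]] := join_attach_paths aR aD ps ls us sP uRD.
apply: e_acyclic; exists z, (rev R1 ++ x1 :: s ++ rev D); split => //; split.
  case: s ps ls us sP {uc pc lc} => [|y s] /= _ ls; first by rewrite ls eqxx in x12.
  by rewrite size_cat /= !addnS.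
split=> //; rewrite lc e_sym.
case: aB => + _ _ _; rewrite rcons_cat rcons_cons sorted_cat_cons => /andP[_].
by case: (D) => [|y D'] /= /andP[].
Qed.

End AttachPaths.

Lemma sorted_segment (T : eqType) (e : rel T) (P : seq T) x1 x2 :
  uniq P -> sorted e P -> x2 \in P -> index x1 P < index x2 P ->
  exists s, [/\ path e x1 s, last x1 s = x2, uniq (x1 :: s), all (mem P) s &
    forall y, y \in P -> index x1 P < index y P <= index x2 P -> y \in s].
Proof.
move=> uP sP x2P lt12; set i1 := index x1 P; set i2 := index x2 P.
have i2P : i2 < size P by rewrite index_mem.
have x1P : x1 \in P by rewrite -index_mem (ltn_trans lt12).
have eP : P = take i1 P ++ x1 :: drop i1.+1 P.
  by rewrite -(nth_index x1 x1P) -drop_nth ?index_mem ?cat_take_drop.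
set D := drop i1.+1 P; set s := take (i2 - i1) D.
have sz_s : size s = i2 - i1 by rewrite size_takel // size_drop; lia.
have nth_s i : i < i2 - i1 -> nth x1 s i = nth x1 P (i1.+1 + i).
  by move=> lt_i; rewrite nth_take // nth_drop.
exists s; split.
- by apply: take_path; move: sP; rewrite {1}eP sorted_cat_cons => /andP[].
- rewrite (last_nth x1) sz_s -[i2 - i1]prednK ?subn_gt0 //= nth_s; last by lia.
  by rewrite -[X in _ = X](nth_index x1 x2P); congr nth; lia.
- have : uniq (x1 :: D) by move: uP; rewrite {1}eP cat_uniq => /and3P[].
  by move/(take_uniq (i2 - i1).+1).
- by apply/allP => y /mem_take /mem_drop.
- move=> y yP lt_y; rewrite -(nth_index x1 yP).
  have -> : index y P = i1.+1 + (index y P - i1.+1) by lia.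
  by rewrite -nth_s; [apply: mem_nth|]; lia.
Qed.

Lemma in_YP_attach_path (V T : finType) (e : rel T) (Y : T -> {set V}) (P : seq T)
    a b v :
  in_YP e Y P a b v ->
  exists A x, [/\ attach_path e P A x, v \in Y (head x A) & a <= index x P <= b].
Proof.
case=> t [vt [[tP ab] | [tP [x [[xP [p [[up [pp lp] offp]]] ab]]]]]].
  by exists [::], t; split => //; split.
exists (belast t p), x; subst x; split.
- by split; rewrite -?lastI.
- by case: p {up pp offp ab xP}.
- by case/andP: ab => -> /ltnW.
Qed.

Section BagsAlongPath.
Variables (V T : finType) (e : rel T) (Y : T -> {set V}) (P : seq T).
Hypothesis e_sym : symmetric e.
Hypothesis e_acyclic :
  ~ (exists x p, uniq (x :: p) /\ 2 <= size p /\ path e x p /\ e (last x p) x).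
Hypothesis Y_interpolation :
  forall t t' t'', on_tpath e t t' t'' -> Y t :&: Y t'' \subset Y t'.
Hypotheses (P_uniq : uniq P) (P_sorted : sorted e P).

Lemma in_YP_between a1 b1 a2 b2 v y :
  in_YP e Y P a1 b1 v -> in_YP e Y P a2 b2 v ->
  y \in P -> b1 < index y P <= a2 -> v \in Y y.
Proof.
move=> /in_YP_attach_path[A1 [x1 [att1 v1 /andP[_ x1_b1]]]].
move=> /in_YP_attach_path[A2 [x2 [att2 v2 /andP[a2_x2 _]]]] yP /andP[b1_y y_a2].
have x1_y : index x1 P < index y P by apply: leq_ltn_trans b1_y.
have y_x2 : index y P <= index x2 P by apply: leq_trans a2_x2.
have [_ _ _ x2P] := att2.
have [s [ps ls us sP s_y]] := sorted_segment P_uniq P_sorted x2P (leq_trans x1_y y_x2).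
have x12 : x1 != x2 by apply: contraTneq (leq_trans x1_y y_x2) => ->; rewrite ltnn.
have uA := attach_paths_disjoint e_sym e_acyclic att1 att2 ps ls us sP x12.
have y_on : on_tpath e (head x1 A1) y (head x2 A2).
  exists (behead (A1 ++ x1 :: s ++ rev A2)); split.
    by have := join_attach_paths e_sym att1 att2 ps ls us sP uA.
  have -> : head x1 A1 :: behead (A1 ++ x1 :: s ++ rev A2) = A1 ++ x1 :: s ++ rev A2.
    by case: (A1).
  by rewrite mem_cat inE mem_cat s_y ?x1_y ?orbT.
by apply: (subsetP (Y_interpolation y_on)); rewrite inE v1 v2.
Qed.

Variables (g : nat) (tt : nat -> T) (U : {set V}).
Hypothesis tt_in : forall i, 1 <= i <= g -> tt i \in P.
Hypothesis tt_incr : forall i, 1 <= i < g -> index (tt i) P < index (tt i.+1) P.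
Hypothesis Y_ttI : forall i j, 1 <= i <= g -> 1 <= j <= g -> i != j ->
  Y (tt i) :&: Y (tt j) = U.

Lemma index_tt_mono i j : 1 <= i -> i < j <= g -> index (tt i) P < index (tt j) P.
Proof.
move=> i_ge1 /andP[lt_ij j_le].
apply: (@homo_ltn_in _ [pred k | 1 <= k <= g] (fun k => index (tt k) P) (fun a b => a < b))
  (lt_ij) => /=.
- exact: ltn_trans.
- by move=> a b + + k; rewrite !inE; lia.
- by move=> k; rewrite !inE => *; apply: tt_incr; lia.
- by rewrite inE; lia.
- by rewrite inE; lia.
Qed.

Lemma in_YP_separated i1 j1 i2 j2 v :
  0 < j1 -> j1.+2 <= i2 <= g ->
  in_YP e Y P (index (tt i1) P) (index (tt j1) P) v ->
  in_YP e Y P (index (tt i2) P) (index (tt j2) P) v -> v \in U.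
Proof.
move=> j1_gt0 /andP[j1_i2 i2_g] v1 v2.
have Y_tt c : j1 < c <= i2 -> v \in Y (tt c).
  move=> /andP[j1_c c_i2]; apply: (in_YP_between v1 v2); first by apply: tt_in; lia.
  apply/andP; split; first by apply: index_tt_mono; lia.
  move: c_i2; rewrite leq_eqVlt => /predU1P[-> // | c_i2].
  by apply/ltnW/index_tt_mono; lia.
by rewrite -(Y_ttI (i := j1.+1) (j := j1.+2)) ?inE ?Y_tt //; lia.
Qed.

Lemma card_window_witnesses m n (N : {set V}) :
  0 < m -> n * m.*2 <= g ->
  (forall j, j < n -> exists v, [/\ v \in N, v \notin U &
     in_YP e Y P (index (tt (j * m.*2).+1) P) (index (tt (j * m.*2 + m)) P) v]) ->
  n <= #|N|.
Proof.
move=> m_gt0 n_g witness.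
have /fin_all_exists[f f_spec] (j : 'I_n) := witness j (ltn_ord j).
have f_inj : injective f.
  suff f_neq (j1 j2 : 'I_n) : j1 < j2 -> f j1 != f j2.
    move=> j1 j2 f12; apply: val_inj.
    by case: (ltngtP j1 j2) => // /f_neq; rewrite f12 eqxx.
  move=> lt12; have [_ fU v1] := f_spec j1; have [_ _ v2] := f_spec j2.
  apply: contra fU => /eqP f12; rewrite f12 in v1 *.
  apply: (in_YP_separated _ _ v1 v2); first by lia.
  by have := ltn_ord j2; nia.
rewrite -[n]card_ord -(card_imset _ f_inj).
by apply/subset_leq_card/subsetP => _ /imsetP[j _ ->]; case: (f_spec j).
Qed.

End BagsAlongPath.

Lemma card_bigcup_le (V I : finType) (A : I -> {set V}) (P : pred I) :
  #|\bigcup_(i | P i) A i| <= \sum_(i | P i) #|A i|.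
Proof.
elim/big_rec2: _ => [|i n B _ le_B]; first by rewrite cards0.
by rewrite (leq_trans (leq_card_setU _ _).1) ?leq_add2l.
Qed.

Lemma card_nbh_le (V E : finType) (ends : E -> V * V) (U : {set V}) d :
  max_degree_le ends d -> #|nbh ends U| <= #|U| * d.
Proof.
move=> deg_le.
pose incident u := [set ed | ((ends ed).1 == u) || ((ends ed).2 == u)].
pose other u (ed : E) := if (ends ed).1 == u then (ends ed).2 else (ends ed).1.
have nbh_sub : nbh ends U \subset \bigcup_(u in U) (other u @: incident u).
  apply/subsetP => v; rewrite inE => /andP[_ /existsP[u /andP[uU /existsP[ed ed_uv]]]].
  apply/bigcupP; exists u => //; apply/imsetP; exists ed.
    by rewrite inE; case/orP: ed_uv => /eqP -> /=; rewrite ?eqxx ?orbT.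
  by rewrite /other; case/orP: ed_uv => /eqP -> /=; rewrite ?eqxx //; case: eqP => // ->.
apply: (leq_trans (subset_leq_card nbh_sub)); apply: (leq_trans (card_bigcup_le _ _)).
rewrite -sum_nat_const; apply: leq_sum => u _.
exact: leq_trans (leq_imset_card _ _) (deg_le u).
Qed.

Theorem lemma6p6 :
  forall m w d : nat, 1 < m -> 0 < w -> 0 < d ->
  exists gamma : nat,
  forall (V E : finType) (ends : E -> V * V),
    loopless ends -> gconnected ends -> max_degree_le ends d ->
  forall (T : finType) (eT : rel T) (Y : T -> {set V}),
    is_tree eT -> lean_tree_decomposition ends eT Y -> td_width_le Y w ->
  forall (P : seq T), tree_path_seq eT P ->
  forall (g' : nat) (tt : nat -> T) (s : nat) (U : {set V}),
    gamma <= g' ->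
    (* t_1, ..., t_g' are interior vertices of P, in this order along P *)
    (forall i, 1 <= i <= g' ->
       tt i \in P /\ 0 < index (tt i) P < (size P).-1) ->
    (forall i, 1 <= i < g' -> index (tt i) P < index (tt i.+1) P) ->
    0 < s ->
    (forall i, 1 <= i <= g' -> #|Y (tt i)| = s) ->
    (forall t, t \in P -> index (tt 1) P <= index t P <= index (tt g') P ->
       s <= #|Y t|) ->
    (forall i j, 1 <= i <= g' -> 1 <= j <= g' -> i != j ->
       Y (tt i) :&: Y (tt j) = U) ->
  exists k : nat, k + m <= g' /\
    ~ (exists v, v \in nbh ends U /\ v \notin U /\
         in_YP eT Y P (index (tt k.+1) P) (index (tt (k + m)) P) v).
Proof.
move=> m w d m_gt1 _ _; set n := (w.+1 * d).+1; exists (n * m.*2).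
move=> V E ends _ _ deg_le T eT Y [_ [eT_sym [_ [_ eT_acyclic]]]] [[_ [_ Y_W2]] _] width
  P [_ [P_uniq P_sorted]] g tt _ U g_ge tt_inner tt_incr _ _ _ Y_ttI.
have tt_in i : 1 <= i <= g -> tt i \in P by case/tt_inner.
apply: NNPP => no_window.
have n_le : n <= #|nbh ends U|.
  apply: (card_window_witnesses eT_sym eT_acyclic Y_W2 P_uniq P_sorted tt_in tt_incr Y_ttI
    _ g_ge); first by lia.
  move=> j lt_jn; apply: NNPP => no_v; apply: no_window; exists (j * m.*2).
  split; first by nia.
  by case=> v [? [? ?]]; apply: no_v; exists v.
have U_le : #|U| <= w.+1.
  by rewrite -(Y_ttI 1 2) ?(leq_trans (subset_leq_card (subsetIl _ _)) (width _)) //; lia.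
have := leq_trans n_le (card_nbh_le U deg_le).
by rewrite /n ltnNge leq_mul2r U_le orbT.
Qed.
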